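(* Let $X$ be the subshift obtained from the construction described in the context, with unique shift-invariant probability measure $\mu$. Then $(X,\sigma,\mu)$ is rigid with rigidity sequence $(l_n)_{n\in\mathbb{N}}$: for every measurable set $A\subset X$, $\lim_{n\to\infty}\mu(\sigma^{l_n}A\,\triangle\,A) = 0$.
   Context: Construction. Let $l_1$ be a sufficiently large perfect square, $N_1 = 2^{\sqrt{l_1}}$, and let $\mathcal{C}_1$ be a set of $N_1$ binary words of length $l_1$. Inductively, given a set $\mathcal{C}_j$ of $N_j$ distinct words of length $l_j$ with an ordering $\mathcal{C}_j = \{u_1^{(j)},\dots,u_{N_j}^{(j)}\}$, let $P_j = \{2\}\cup\{i^2 : 2 \le i \le \lfloor\sqrt{N_j}\rfloor\}$, and let $\mathcal{C}_{j+1}$ be the set of all words $u^{(j)}_{\pi(1)}\cdots u^{(j)}_{\pi(N_j)}$ where $\pi$ ranges over permutations of $\{1,\dots,N_j\}$ fixing every element outside $P_j$; so $N_{j+1} = (\lfloor\sqrt{N_j}\rfloor)!$ and $l_{j+1} = l_jN_j$. The ordering of $\mathcal{C}_{j+1}$ is arbitrary except that its first element is $u_1^{(j)}u_2^{(j)}\cdots u_{N_j}^{(j)}$. $X\subset\{0,1\}^{\mathbb{Z}}$ is the set of bi-infinite sequences each finite subword of which is a subword of some word in $\bigcup_j\mathcal{C}_j$; it is strictly ergodic. *)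

From HB Require Import structures.
From mathcomp Require Import all_boot all_order all_algebra all_fingroup.
From mathcomp Require Import all_classical all_reals all_analysis.
Set Implicit Arguments. Unset Strict Implicit. Unset Printing Implicit Defensive.
Import Order.TTheory GRing.Theory Num.Theory.
Local Open Scope classical_set_scope.

(* Bi-infinite binary sequences {0,1}^Z, with 0 = false, 1 = true. *)
Definition bseq := int -> bool.

(* Generators of the product (= Borel) sigma-algebra: the coordinate cylinders. *)
Definition cylinders : set (set bseq) :=
  fun A => exists (i : int) (b : bool), A = [set x : bseq | x i = b].

Definition Omega := g_sigma_algebraType cylinders.

Definition shiftn (n : nat) (x : Omega) : Omega := fun i => x (i + (n%:Z))%R.
Definition shift := shiftn 1.

(* The set P_j of the construction, for N = N_j (1-based positions):
   P = {2} U {i^2 : 2 <= i <= floor (sqrt N)}; note i <= floor(sqrt N) <-> i*i <= N. *)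
Definition Pset (N p : nat) : Prop :=
  p = 2%N \/ exists i : nat, (2 <= i)%N /\ (i * i <= N)%N /\ p = (i * i)%N.

(* The next-level set C_{j+1} built from the ordered list s = (u_1,...,u_N) of C_j:
   all words u_{pi(1)} ... u_{pi(N)} with pi a permutation fixing every element
   outside P (positions are 0-based here: position k corresponds to k+1). *)
Definition next_words (s : seq (seq bool)) (w : seq bool) : Prop :=
  exists pi : {perm 'I_(size s)},
    (forall k : 'I_(size s), ~ Pset (size s) k.+1 -> pi k = k) /\
    w = flatten [seq nth [::] s (pi k) | k <- enum 'I_(size s)].

(* C : nat -> seq (seq bool) gives, for each j >= 1, the ordered list C_j
   (C 0 is unused).  is_construction l1 C says C is an instance of the
   construction with first length l1. *)
Definition is_construction (l1 : nat) (C : nat -> seq (seq bool)) : Prop :=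
  (exists r : nat, l1 = (r * r)%N /\ size (C 1%N) = (2 ^ r)%N) /\
  uniq (C 1%N) /\ (forall w, w \in C 1%N -> size w = l1) /\
  forall j : nat, (1 <= j)%N ->
    uniq (C j.+1) /\ (forall w, w \in C j.+1 <-> next_words (C j) w) /\
    head [::] (C j.+1) = flatten (C j).

Definition wlen (C : nat -> seq (seq bool)) (j : nat) : nat := size (head [::] (C j)).

Definition subword (x : bseq) (a : int) (k : nat) : seq bool :=
  [seq x (a + (i%:Z))%R | i <- iota 0 k].

Definition subshiftX (C : nat -> seq (seq bool)) : set Omega :=
  [set x | forall (a : int) (k : nat), exists j w,
      (1 <= j)%N /\ w \in C j /\ infix (subword x a k) w].

Definition invariant_on {R : realType} (mu : probability Omega R) (X : set Omega) : Prop :=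
  mu X = 1%E /\ forall A : set Omega, measurable A -> mu (shift @^-1` A) = mu A.

Definition symdiff {T} (A B : set T) : set T := (A `\` B) `|` (B `\` A).

From Pilot Require Import Defs.
From HB Require Import structures.
From mathcomp Require Import all_boot all_order all_algebra all_fingroup.
From mathcomp Require Import all_classical all_reals all_analysis.
From mathcomp Require Import measurable_realfun.
From mathcomp Require Import zify lra.
Import Order.TTheory GRing.Theory Num.Theory.
Local Open Scope classical_set_scope.
Set Implicit Arguments. Unset Strict Implicit. Unset Printing Implicit Defensive.

(* Rigidity along (l_n): a cylinder [x_i = b] moves by at most mu(x_0 <> x_(l_n)).
   Two words of C_(n+1) are permutations of the same blocks of C_n that only move the
   |P_n| ~ sqrt N_n blocks indexed by P_n, so they differ in at most |P_n| l_n places.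
   Any window of length 2 l_(n+1) of a point of X lies in a concatenation of words of
   C_(n+1), so x and its shift by l_(n+1) disagree at most 2 |P_n| l_n times among l_(n+1)
   consecutive positions; by invariance mu(x_0 <> x_(l_(n+1))) <= 2 |P_n| / N_n -> 0.
   Sets along which the measure is rigid form a sigma-algebra (using invariance to control
   the tail of a countable union), and it contains the cylinders. *)

Lemma drop_zip (S T : Type) t (s : seq S) (s' : seq T) :
  drop t (zip s s') = zip (drop t s) (drop t s').
Proof.
elim: t s s' => [|t IH] [|x s] [|y s'] //=; rewrite ?drop0 //.
- by case: (drop _ _).
- by case: (drop _ _).
Qed.

Lemma take_zip (S T : Type) t (s : seq S) (s' : seq T) :
  take t (zip s s') = zip (take t s) (take t s').
Proof. by elim: t s s' => [|t IH] [|x s] [|y s'] //=; rewrite IH. Qed.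

Lemma drop_cat_le (S : Type) n (s1 s2 : seq S) :
  n <= size s1 -> drop n (s1 ++ s2) = drop n s1 ++ s2.
Proof.
rewrite drop_cat leq_eqVlt => /orP [/eqP ->|->] //.
by rewrite ltnn subnn drop0 drop_size.
Qed.

Section Hamming.
Variable T : eqType.
Implicit Types u v : seq T.

Definition hamming u v := count (fun p => p.1 != p.2) (zip u v).

Lemma hamming_cat u1 u2 v1 v2 : size u1 = size v1 ->
  hamming (u1 ++ u2) (v1 ++ v2) = hamming u1 v1 + hamming u2 v2.
Proof. by move=> h; rewrite /hamming zip_cat // count_cat. Qed.

Lemma hamming_refl u : hamming u u = 0.
Proof. by elim: u => //= x u; rewrite /hamming /= eqxx. Qed.

Lemma hamming_nil_r u : hamming u [::] = 0.
Proof. by case: u. Qed.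

Lemma hamming_le_size u v : hamming u v <= size u.
Proof. by rewrite /hamming (leq_trans (count_size _ _)) // size_zip geq_minl. Qed.

Lemma hamming_drop t u v : hamming (drop t u) (drop t v) <= hamming u v.
Proof.
by rewrite /hamming -drop_zip -{2}(cat_take_drop t (zip u v)) count_cat leq_addl.
Qed.

Lemma hamming_take t u v : hamming (take t u) (take t v) <= hamming u v.
Proof.
by rewrite /hamming -take_zip -{2}(cat_take_drop t (zip u v)) count_cat leq_addr.
Qed.

Lemma hamming_flatten_map (I : Type) (s : seq I) (f g : I -> seq T) :
  (forall i, size (f i) = size (g i)) ->
  hamming (flatten (map f s)) (flatten (map g s)) = \sum_(i <- s) hamming (f i) (g i).
Proof.
move=> fg; elim: s => [|i s IH]; first by rewrite big_nil.
by rewrite /= hamming_cat // IH big_cons.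
Qed.

Lemma hamming_map (I : Type) (f g : I -> T) (s : seq I) :
  hamming (map f s) (map g s) = count (fun i => f i != g i) s.
Proof. by elim: s => //= i s; rewrite /hamming /= => ->. Qed.

End Hamming.

Section Blocks.
Variables (T : eqType) (l : nat) (bs : seq (seq T)).
Hypothesis size_bs : forall b, b \in bs -> size b = l.

Lemma size_flatten_blocks : size (flatten bs) = size bs * l.
Proof.
elim: bs size_bs => //= b bs' IH h.
by rewrite size_cat IH ?h ?mem_head // => c cb; apply: h; rewrite inE cb orbT.
Qed.

Lemma window_flatten_blocks q r : r <= l ->
  take l (drop (q * l + r) (flatten bs)) =
  drop r (nth [::] bs q) ++ take r (nth [::] bs q.+1).
Proof.
move=> rl; elim: q bs size_bs => [|q IH] [|b cs] //= sz;
  have sb : size b = l by apply: sz; rewrite mem_head.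
- rewrite drop_cat_le ?sb // take_cat size_drop sb ltnNge leq_subr /= subKn //.
  case: cs sz => //= b' cs sz.
  by rewrite takel_cat // (sz b') // inE mem_head orbT.
- rewrite drop_cat sb ltnNge mulSn -addnA leq_addr /= addKn.
  by apply: IH => c cs_c; apply: sz; rewrite inE cs_c orbT.
Qed.

Lemma hamming_window_blocks B o :
  (forall b b', b \in bs -> b' \in bs -> hamming b b' <= B) ->
  o + l + l <= size (flatten bs) ->
  hamming (take l (drop o (flatten bs))) (take l (drop (o + l) (flatten bs))) <= B + B.
Proof.
move=> hB; rewrite size_flatten_blocks.
have [->|l_gt0] := posnP l; first by rewrite !take0.
rewrite {1 2}(divn_eq o l); set q := o %/ l; set r := o %% l => oln.
have rl : r <= l by rewrite ltnW // ltn_mod.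
have qn : q.+2 <= size bs.
  by rewrite -(leq_pmul2r l_gt0); apply: leq_trans oln; rewrite !mulSn; lia.
have mem_bs i : i < size bs -> nth [::] bs i \in bs by move=> ?; apply: mem_nth.
have -> : o + l = q.+1 * l + r by rewrite mulSn {1}(divn_eq o l); lia.
rewrite !window_flatten_blocks //.
rewrite hamming_cat; last by rewrite !size_drop !size_bs ?mem_bs // ltnW.
apply: leq_add; first by rewrite (leq_trans (hamming_drop _ _ _)) // hB ?mem_bs // ltnW.
have [qn2|qn2] := ltnP q.+2 (size bs).
  by rewrite (leq_trans (hamming_take _ _ _)) // hB ?mem_bs.
by rewrite (nth_default _ qn2) /= hamming_nil_r.
Qed.

End Blocks.

Lemma eq_flatten_shape (T : Type) (ss1 ss2 : seq (seq T)) :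
  shape ss1 = shape ss2 -> flatten ss1 = flatten ss2 -> ss1 = ss2.
Proof. by move=> sh fl; rewrite -(flattenK ss1) -(flattenK ss2) sh fl. Qed.

Lemma flatten_flattens (T : eqType) (P : pred (seq T)) (ws : seq (seq T)) :
  {in ws, forall w, exists2 bs, all P bs & w = flatten bs} ->
  exists2 bs, all P bs & flatten ws = flatten bs.
Proof.
elim: ws => [|w ws IH] hws; first by exists [::].
have [bs Pbs ->] := hws w (mem_head _ _).
have [|cs Pcs ws_cs] := IH; first by move=> v vws; apply: hws; rewrite inE vws orbT.
by exists (bs ++ cs); rewrite /= ?ws_cs ?all_cat ?Pbs ?flatten_cat.
Qed.

Definition Psetb (N p : nat) : bool :=
  (p == 2) || has (fun i => (2 <= i) && (i * i <= N) && (p == i * i)) (iota 0 N.+1).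

Lemma PsetP N p : Pset N p <-> Psetb N p.
Proof.
split.
  case=> [->|[i [i2 [iN ->]]]]; first by rewrite /Psetb eqxx.
  apply/orP; right; apply/hasP; exists i; last by rewrite i2 iN eqxx.
  by rewrite mem_iota add0n ltnS (leq_trans _ iN) // leq_pmulr // (leq_trans _ i2).
case/orP=> [/eqP ->|/hasP [i _ /andP [/andP [i2 iN] /eqP ->]]]; first by left.
by right; exists i.
Qed.

(* [P_N] as a subset of ['I_N]: position [i] stands for [i.+1]. *)
Definition Pfin (N : nat) : {set 'I_N} := [set i : 'I_N | Psetb N i.+1].

Lemma exists_isqrt N : exists m, m * m <= N < m.+1 * m.+1.
Proof.
elim: N => [|N [m /andP [mN Nm]]]; first by exists 0.
have [NSm|] := ltnP N.+1 (m.+1 * m.+1); first by exists m; rewrite NSm andbT; lia.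
by exists m.+1; apply/andP; split; nia.
Qed.

Lemma card_Pfin_le N m : N < m.+1 * m.+1 -> #|Pfin N| <= m.+2.
Proof.
move=> Nm; pose S := 1 :: [seq i * i - 1 | i <- iota 0 m.+1].
have -> : m.+2 = size S by rewrite /= size_map size_iota.
rewrite cardE -(size_map val); apply: uniq_leq_size.
  by rewrite (map_inj_uniq val_inj) enum_uniq.
move=> x /mapP [i]; rewrite mem_enum inE => Pi ->; rewrite -[val i]/(nat_of_ord i).
case/orP: Pi => [/eqP [->]|/hasP [j _ /andP [/andP [j2 jN] /eqP ij]]].
  exact: mem_head.
rewrite inE; apply/orP; right; apply/mapP; exists j; last by rewrite -ij subn1.
by rewrite mem_iota add0n ltnS; nia.
Qed.

Lemma card_Pfin_ge N m : 2 <= m -> m * m <= N -> m <= #|Pfin N|.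
Proof.
move=> m2 mN; pose S := 1 :: [seq j * j - 1 | j <- iota 2 (m - 1)].
have -> : m = size S by rewrite /= size_map size_iota; lia.
rewrite cardE -(size_map val); apply: uniq_leq_size.
  rewrite /S /= map_inj_in_uniq ?iota_uniq ?andbT.
    by apply/mapP => [[j]]; rewrite mem_iota => ?; lia.
  by move=> x y; rewrite !mem_iota => ? ?; nia.
move=> x; rewrite inE => /orP [/eqP ->|/mapP [j]].
  have N1 : 1 < N by nia.
  by apply/mapP; exists (Ordinal N1); rewrite // mem_enum inE.
rewrite mem_iota => jm ->.
have jN : j * j - 1 < N by nia.
apply/mapP; exists (Ordinal jN) => //; rewrite mem_enum inE /Psetb /=.
apply/orP; right; apply/hasP; exists j; first by rewrite mem_iota; nia.
by apply/andP; split; [apply/andP; split|apply/eqP]; nia.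
Qed.

Lemma card_Pfin_ratio N M : M.+1 * M.+1 <= N -> 2 * #|Pfin N| * M <= 6 * N.
Proof.
move=> MN; have [m /andP [mN Nm]] := exists_isqrt N.
have Mm : M < m.
  rewrite ltnNge; apply/negP => mM.
  by have := leq_mul (mM : m.+1 <= M.+1) (mM : m.+1 <= M.+1); lia.
have := leq_mul (leq_mul (leqnn 2) (card_Pfin_le Nm)) (ltnW Mm); nia.
Qed.

Lemma sq_le_fact m : 5 <= m -> m.+1 * m.+1 <= m`!.
Proof.
elim: m => // m IH; rewrite leq_eqVlt => /orP [/eqP <-|m5] //.
by rewrite factS; have := IH m5; nia.
Qed.

Lemma subwordD (x : int -> bool) a m n :
  subword x a (m + n) = subword x a m ++ subword x (a + m%:Z)%R n.
Proof.
rewrite /subword iotaD map_cat add0n -[in iota m n](addn0 m) iotaDl -map_comp.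
by congr (_ ++ _); apply: eq_map => i /=; rewrite PoszD addrA.
Qed.

Section Construction.
Variables (l1 : nat) (C : nat -> seq (seq bool)).
Hypothesis hC : is_construction l1 C.

Lemma mem_C_nextP k w : w \in C k.+2 <-> next_words (C k.+1) w.
Proof. by case: hC => _ [_ [_ h]]; have [_ []] := h k.+1 isT. Qed.

Lemma uniq_C k : uniq (C k.+1).
Proof. by case: hC => _ [uniq_C1 [_ h]]; case: k => // k; have [] := h k.+1 isT. Qed.

Lemma head_C k : head [::] (C k.+2) = flatten (C k.+1).
Proof. by case: hC => _ [_ [_ h]]; have [_ []] := h k.+1 isT. Qed.

Lemma wlen1 : wlen C 1 = l1.
Proof.
case: hC => [[r [_ sC1]] [_ [sz _]]].
have : 0 < size (C 1) by rewrite sC1 expn_gt0.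
by rewrite /wlen; case: (C 1) sz => // w ws sz _; rewrite sz ?mem_head.
Qed.

Lemma size_C_word k w : w \in C k.+1 -> size w = wlen C k.+1.
Proof.
elim: k w => [|k IH] w.
  by case: hC => _ [_ [sz _]] /sz ->; rewrite wlen1.
move=> /mem_C_nextP [pi [_ ->]]; rewrite /wlen head_C.
have sz b : b \in C k.+1 -> size b = wlen C k.+1 by apply: IH.
rewrite !(size_flatten_blocks (l := wlen C k.+1)) ?size_map -?enumT ?size_enum_ord //.
by move=> _ /mapP [i _ ->]; apply/sz/mem_nth.
Qed.

Lemma wlenS k : wlen C k.+2 = size (C k.+1) * wlen C k.+1.
Proof. by rewrite {1}/wlen head_C (size_flatten_blocks (size_C_word (k := k))). Qed.

Lemma C_flatten n k w :
  w \in C (k + n).+1 -> exists2 bs, all (mem (C n.+1)) bs & w = flatten bs.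
Proof.
elim: k w => [|k IH] w; first by exists [:: w]; rewrite /= ?cats0 ?andbT.
rewrite addSn => /mem_C_nextP [pi [_ ->]]; apply: flatten_flattens.
by move=> _ /mapP [i _ ->]; apply/IH/mem_nth.
Qed.

Lemma hamming_C_le k u v : u \in C k.+2 -> v \in C k.+2 ->
  hamming u v <= #|Pfin (size (C k.+1))| * wlen C k.+1.
Proof.
move=> /mem_C_nextP [pi [pi_fix ->]] /mem_C_nextP [pi' [pi'_fix ->]].
set s := C k.+1.
have sz (i : 'I_(size s)) : size (nth [::] s i) = wlen C k.+1.
  by apply/size_C_word/mem_nth.
rewrite hamming_flatten_map; last by move=> i; rewrite !sz.
rewrite -sum_nat_const big_enum /= [leqLHS]big_mkcond [leqRHS]big_mkcond /=.
apply: leq_sum => i _; rewrite inE; case: ifP => Pi.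
  by rewrite -(sz (pi i)) hamming_le_size.
have nPi : ~ Pset (size s) i.+1 by move/PsetP; rewrite Pi.
by rewrite pi_fix // pi'_fix // hamming_refl.
Qed.

Lemma fact_card_Pfin_le k : (#|Pfin (size (C k.+1))|)`! <= size (C k.+2).
Proof.
set s := C k.+1; set N := size s.
pose F (pi : {perm 'I_N}) := flatten [seq nth [::] s (pi i) | i <- enum 'I_N].
rewrite -card_perm cardE -(size_map F); apply: uniq_leq_size.
  rewrite map_inj_in_uniq ?enum_uniq // => p q _ _ /eq_flatten_shape Fpq.
  have {}Fpq : [seq nth [::] s (p i) | i <- enum 'I_N] =
               [seq nth [::] s (q i) | i <- enum 'I_N].
    apply: Fpq; rewrite /shape -!map_comp; apply: eq_map => i /=.
    by rewrite !(@size_C_word k) ?mem_nth.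
  apply/permP => i; apply: val_inj; apply/eqP.
  rewrite -(nth_uniq [::] _ _ (uniq_C k)) ?ltn_ord //; apply/eqP.
  have := congr1 (nth [::]^~ i) Fpq.
  by rewrite !(nth_map i) -?enumT ?size_enum_ord // nth_ord_enum.
move=> w /mapP [p]; rewrite mem_enum => Pp ->; apply/mem_C_nextP; exists p; split => // i nPi.
by apply: (out_perm Pp); rewrite inE; apply/negP => /PsetP.
Qed.

Section LargeFirstLength.
Hypothesis l1_ge25 : 25 <= l1.

Lemma size_C_ge k : k + 25 <= size (C k.+1).
Proof.
elim: k => [|k IH].
  case: hC => [[r [l1r ->]] _]; have r5 : 5 <= r by nia.
  exact: leq_trans (leq_pexp2l (isT : 0 < 2) r5).
have [m /andP [mN Nm]] := exists_isqrt (size (C k.+1)).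
have m5 : 5 <= m by nia.
have := leq_fact (card_Pfin_ge (leq_trans (isT : 2 <= 5) m5) mN).
by have := fact_card_Pfin_le k; have := sq_le_fact m5; lia.
Qed.

Lemma wlen_gt0 k : 0 < wlen C k.+1.
Proof.
elim: k => [|k IH]; first by rewrite wlen1 (leq_trans _ l1_ge25).
by rewrite wlenS muln_gt0 IH andbT (leq_trans _ (size_C_ge k)) // addn_gt0 orbT.
Qed.

Lemma wlen_leq j k : j <= k -> wlen C j.+1 <= wlen C k.+1.
Proof.
elim: k => [|k IH]; first by rewrite leqn0 => /eqP ->.
rewrite leq_eqVlt => /orP [/eqP -> //|/IH jk]; apply: leq_trans jk _.
by rewrite wlenS leq_pmull // (leq_trans _ (size_C_ge k)) // addn_gt0 orbT.
Qed.

Lemma hamming_subshift_window k x : subshiftX C x ->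
  hamming (subword x 0 (wlen C k.+2)) (subword x (wlen C k.+2)%:Z (wlen C k.+2))
    <= 2 * (#|Pfin (size (C k.+1))| * wlen C k.+1).
Proof.
set L := wlen C k.+2; move=> /(_ 0%R (L + L)) [j [w [j1 [wC xw]]]].
have sw := size_infix xw; rewrite size_map size_iota in sw.
case: j j1 wC sw => // j _ wC sw.
have kj : k.+1 <= j.
  rewrite ltnNge; apply/negP => /wlen_leq jk.
  move: sw; rewrite (size_C_word wC) /L wlenS; have := wlen_gt0 k.
  by have := size_C_ge k; nia.
rewrite -(subnK kj) in wC; have [bs bsC wbs] := C_flatten wC.
have bs_sz b : b \in bs -> size b = L by move=> bb; apply: size_C_word; apply: (allP bsC).
have bs_ham b b' : b \in bs -> b' \in bs -> hamming b b' <= #|Pfin (size (C k.+1))| * wlen C k.+1.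
  by move=> bb bb'; apply: hamming_C_le; apply: (allP bsC).
move: xw; rewrite subwordD add0r wbs => /infixP [p [q wpq]].
have szL a : size (subword x a L) = L by rewrite size_map size_iota.
have := hamming_window_blocks bs_sz (o := size p) bs_ham; rewrite mul2n -addnn.
rewrite wpq -catA drop_size_cat // (take_size_cat _ (szL _)) [size p + L]addnC.
rewrite -drop_drop drop_size_cat // (drop_size_cat _ (szL _)) (take_size_cat _ (szL _)); apply.
by rewrite !size_cat !szL; lia.
Qed.

End LargeFirstLength.
End Construction.

Definition shiftz (z : int) (x : Omega) : Omega := fun i => x (i + z)%R.

Lemma shiftzK z : cancel (shiftz z) (shiftz (- z)).
Proof. by move=> x; apply/funext => i; rewrite /shiftz subrK. Qed.

Lemma shiftzNK z : cancel (shiftz (- z)) (shiftz z).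
Proof. by move=> x; apply/funext => i; rewrite /shiftz addrK. Qed.

Lemma image_shiftz z (A : set Omega) : shiftz z @` A = shiftz (- z) @^-1` A.
Proof.
apply/seteqP; split => [_ [x Ax <-]|y Ay]; first by rewrite /= shiftzK.
by exists (shiftz (- z) y); rewrite ?shiftzNK.
Qed.

Lemma shiftzS n (x : Omega) : shiftz n.+1%:Z x = shiftz n%:Z (Defs.shift x).
Proof.
by apply/funext => i; rewrite /shiftz /Defs.shift /shiftn -addrA -PoszD addn1.
Qed.

Lemma measurable_cylinder (i : int) (b : bool) : measurable [set x : Omega | x i = b].
Proof. by apply: sub_sigma_algebra; exists i, b. Qed.

Lemma measurable_subword (Q : seq bool -> Prop) a k :
  measurable [set x : Omega | Q (subword x a k)].
Proof.
elim: k Q a => [|k IH] Q a.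
  have [Q0|nQ0] := pselect (Q [::]).
    by rewrite (_ : [set x | _] = setT) //; apply/seteqP; split.
  by rewrite (_ : [set x | _] = set0) //; apply/seteqP; split.
have subwordS (x : Omega) : subword x a k.+1 = x a :: subword x (a + 1)%R k.
  by rewrite -addn1 addnC subwordD /subword /= addr0.
rewrite (_ : [set x | _] =
  ([set x | x a = true] `&` [set x | Q (true :: subword x (a + 1)%R k)]) `|`
  ([set x | x a = false] `&` [set x | Q (false :: subword x (a + 1)%R k)])).
  apply: measurableU; apply: measurableI; try exact: measurable_cylinder.
    exact: (IH (fun s => Q (true :: s))).
  exact: (IH (fun s => Q (false :: s))).
apply/seteqP; split => x /=; rewrite subwordS; last by case=> [[-> ?]|[-> ?]].
by case: (x a) => Qx; [left|right].
Qed.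

Lemma measurable_subshiftX C : measurable (subshiftX C).
Proof.
pose F (n : nat) : set Omega :=
  if unpickle n is Some (a, k) then
    [set x | exists j w, (1 <= j)%N /\ w \in C j /\ infix (subword x a k) w]
  else setT.
rewrite (_ : subshiftX C = \bigcap_n F n).
  apply: bigcapT_measurable => n; rewrite /F; case: (unpickle n) => [[a k]|] //.
  exact: (measurable_subword (fun s => exists j w, (1 <= j)%N /\ w \in C j /\ infix s w)).
apply/seteqP; split => [x Xx n _|x Fx a k]; first by rewrite /F; case: unpickle => [[]|].
by have := Fx (pickle (a, k)) I; rewrite /F pickleK.
Qed.

Lemma measurable_shiftz z (A : set Omega) : measurable A -> measurable (shiftz z @^-1` A).
Proof.
have mz : measurable_fun setT (shiftz z).
  apply: (@measurability _ _ _ _ setT (shiftz z) cylinders) => // _ [_ [i [b ->]] <-].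
  by rewrite setTI; apply: (measurable_cylinder (i + z)%R b).
by move=> mA; have := mz measurableT _ mA; rewrite setTI.
Qed.

Definition mismatch (L : nat) : set Omega := [set x | x 0%R != x (Posz L)].

Lemma measurable_mismatch L : measurable (mismatch L).
Proof.
rewrite (_ : mismatch L =
  [set x | nth false (subword x 0 L.+1) 0 != nth false (subword x 0 L.+1) L]).
  exact: (measurable_subword (fun s => nth false s 0 != nth false s L)).
by apply/seteqP; split => x; rewrite /= /subword !(nth_map 0%N) ?size_iota // !nth_iota // !add0r.
Qed.

Lemma count_mismatch (x : Omega) L :
  count (fun i => shiftz i%:Z x \in mismatch L) (iota 0 L) =
  hamming (subword x 0 L) (subword x L%:Z L).
Proof.
rewrite /subword hamming_map; apply: eq_count => i.
by apply/idP/idP; rewrite in_setE.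
Qed.

Lemma sum_indic_count (T : Type) (R : realType) (G : nat -> set T) (x : T) (s : seq nat) :
  (\sum_(i <- s) (\1_(G i) x)%:E = ((count (fun i => x \in G i) s)%:R : R)%:E)%E.
Proof.
elim: s => [|i s IH]; first by rewrite big_nil.
by rewrite big_cons IH /= indicE natrD EFinD; case: (x \in G i).
Qed.

Lemma measureI_full (d : measure_display) (T : measurableType d) (R : realType)
    (P : probability T R) (X A : set T) :
  P X = 1%E -> measurable X -> measurable A -> P (A `&` X) = P A.
Proof.
move=> PX1 mX mA; rewrite [RHS](measureDI P mA mX).
rewrite -[LHS]add0e; congr (_ + _)%E; apply/esym/eqP; rewrite eq_le measure_ge0 andbT.
have <- : P (~` X) = 0%E by rewrite probability_setC // PX1 subee.
apply: le_measure; last by move=> x [].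
  by rewrite inE; apply: measurableD.
by rewrite inE; apply: measurableC.
Qed.

Section Invariance.
Variables (R : realType) (mu : probability Omega R) (X : set Omega).
Hypothesis muX : invariant_on mu X.

Lemma shiftz_preserving z (A : set Omega) : measurable A -> mu (shiftz z @^-1` A) = mu A.
Proof.
have nat_case n B : measurable B -> mu (shiftz n%:Z @^-1` B) = mu B.
  elim: n B => [|n IH] B mB.
    by congr (mu _); apply/seteqP; split => x; rewrite /= /shiftz; under eq_fun do rewrite addr0.
  have -> : shiftz n.+1%:Z @^-1` B = Defs.shift @^-1` (shiftz n%:Z @^-1` B).
    by apply/seteqP; split => x; rewrite /= shiftzS.
  by case: muX => _ ->; rewrite ?IH //; apply: measurable_shiftz.
case: z => n mA; first exact: nat_case.
rewrite -{2}(_ : shiftz n.+1%:Z @^-1` (shiftz (Negz n) @^-1` A) = A).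
  by rewrite nat_case //; apply: measurable_shiftz.
by apply/seteqP; split => x; rewrite /= NegzE shiftzNK.
Qed.

Local Open Scope ereal_scope.

(* By invariance, [L * mu F] is the integral over [X] of the number of [i < L]
   with [shiftz i x \in F]. *)
Lemma measure_le_orbit_count (F : set Omega) (L c : nat) :
  measurable X -> measurable F -> (0 < L)%N ->
  (forall x, X x -> (count (fun i => shiftz i%:Z x \in F) (iota 0 L) <= c)%N) ->
  mu F <= (c%:R / L%:R)%:E.
Proof.
move=> mX mF L_gt0 cnt.
pose G i := shiftz i%:Z @^-1` F.
have mG i : measurable (G i) by apply: measurable_shiftz.
have sumE : \sum_(0 <= i < L) mu F = \int[mu]_(x in X) \sum_(0 <= i < L) (\1_(G i) x)%:E.
  rewrite ge0_integral_sum //; last first.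
    by move=> i; apply/measurable_EFinP; apply: measurable_indic.
  apply: eq_bigr => i _; rewrite integral_indic //; apply/esym.
  exact: etrans (measureI_full muX.1 mX (mG i)) (shiftz_preserving _ mF).
have : \sum_(0 <= i < L) mu F <= c%:R%:E.
  rewrite sumE; apply: (@le_trans _ _ (\int[mu]_(x in X) cst c%:R%:E x)).
    apply: ge0_le_integral => //.
    - by move=> x _; apply: sume_ge0 => i _; rewrite lee_fin indicE.
    - by apply: emeasurable_sum => i; apply/measurable_EFinP; apply: measurable_indic.
    - by move=> x Xx; rewrite sum_indic_count lee_fin ler_nat /index_iota subn0; apply: cnt.
  have /eqP cX : c%:R%:E * mu X = c%:R%:E by case: muX => X1 _; rewrite X1 mule1.
  by rewrite integral_cst // le_eqVlt cX.
have /andP [muF0 muF1] : (0 <= mu F) && (mu F <= 1) by rewrite measure_ge0 probability_le1.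
move: muF0 muF1; case: (mu F) => // r _ _.
rewrite sumEFin lee_fin sumr_const_nat subn0 lee_fin ler_pdivlMr ?ltr0n //.
by rewrite mulr_natr.
Qed.

End Invariance.

Local Open Scope ereal_scope.

Lemma nneg_cvge0P (R : realType) (u : nat -> \bar R) : (forall n, 0 <= u n) ->
  u @ \oo --> 0 <-> forall e : R, (0 < e)%R -> \forall n \near \oo, u n <= e%:E.
Proof.
move=> u_ge0; have fin_le e n : u n <= e%:E -> u n \is a fin_num.
  by move=> ue; rewrite ge0_fin_numE // (le_lt_trans ue) ?ltry.
split=> [/fine_cvgP [u_fin u_cvg] e e_gt0|u_le].
  apply: filterS2 u_fin ((proj1 (cvgrPdist_le _ _)) u_cvg e e_gt0) => n un une.
  by rewrite -(fineK un) lee_fin (le_trans (ler_norm _)) // -normrN -sub0r.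
apply/fine_cvgP; split; first exact: filterS (fin_le 1%R) (u_le 1%R ltr01).
apply/cvgrPdist_le => e e_gt0; apply: filterS (u_le e e_gt0) => n une.
by rewrite sub0r normrN ger0_norm ?fine_ge0 // -lee_fin fineK // (fin_le e).
Qed.

Lemma symdiff_preimageU (T : Type) (g : T -> T) (A B : set T) :
  symdiff (g @^-1` (A `|` B)) (A `|` B) `<=` symdiff (g @^-1` A) A `|` symdiff (g @^-1` B) B.
Proof.
move=> x; rewrite /symdiff /=.
by case: (pselect (A x)); case: (pselect (B x)); case: (pselect (A (g x)));
  case: (pselect (B (g x))); tauto.
Qed.

Lemma symdiff_preimage_setD (T : Type) (g : T -> T) (A B : set T) : B `<=` A ->
  symdiff (g @^-1` A) A `<=` symdiff (g @^-1` B) B `|` (g @^-1` (A `\` B) `|` (A `\` B)).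
Proof.
move=> BA x; have := @BA x; have := @BA (g x); rewrite /symdiff /=.
by case: (pselect (A x)); case: (pselect (B x)); case: (pselect (A (g x)));
  case: (pselect (B (g x))); tauto.
Qed.

Section Rigidity.
Variables (d : measure_display) (T : measurableType d) (R : realType).
Variables (mu : probability T R) (f : nat -> T -> T).
Hypothesis measurable_f : forall n A, measurable A -> measurable (f n @^-1` A).
Hypothesis mu_f : forall n A, measurable A -> mu (f n @^-1` A) = mu A.

Definition rigid_set (A : set T) : Prop := measurable A /\
  forall e : R, (0 < e)%R -> \forall n \near \oo, mu (symdiff (f n @^-1` A) A) <= e%:E.

Lemma measurable_symdiff (A B : set T) :
  measurable A -> measurable B -> measurable (symdiff A B).
Proof. by move=> mA mB; apply: measurableU; apply: measurableD. Qed.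

Lemma measure_le_subU (S S1 S2 : set T) :
  measurable S -> measurable S1 -> measurable S2 ->
  S `<=` S1 `|` S2 -> mu S <= mu S1 + mu S2.
Proof.
move=> mS mS1 mS2 sS; apply: le_trans (measureU2 _ mS1 mS2).
by apply: le_measure; rewrite ?inE //; apply: measurableU.
Qed.

Lemma measurable_symdiff_preimage n (A : set T) :
  measurable A -> measurable (symdiff (f n @^-1` A) A).
Proof. by move=> mA; apply: measurable_symdiff => //; apply: measurable_f. Qed.

Lemma rigid_set0 : rigid_set set0.
Proof.
split=> [|e e_gt0]; first exact: measurable0.
apply: nearW => n; rewrite (_ : symdiff _ _ = set0) ?measure0 ?lee_fin ?ltW //.
by apply/seteqP; split => x // [[]|[]].
Qed.

Lemma rigid_setC (A : set T) : rigid_set A -> rigid_set (setT `\` A).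
Proof.
move=> [mA rA]; split=> [|e /rA]; first exact: measurableD.
apply: filterS => n; rewrite (_ : symdiff _ _ = symdiff (f n @^-1` A) A) //.
apply/seteqP; split => x; rewrite /symdiff /=;
  by case: (pselect (A x)); case: (pselect (A (f n x))); tauto.
Qed.

Lemma rigid_setU (A B : set T) : rigid_set A -> rigid_set B -> rigid_set (A `|` B).
Proof.
move=> [mA rA] [mB rB]; split=> [|e e_gt0]; first exact: measurableU.
have e2_gt0 : (0 < e / 2)%R by rewrite divr_gt0.
apply: filterS2 (rA _ e2_gt0) (rB _ e2_gt0) => n An Bn.
apply: le_trans (measure_le_subU (measurable_symdiff_preimage n (measurableU _ _ mA mB))
  (measurable_symdiff_preimage n mA) (measurable_symdiff_preimage n mB)
  (@symdiff_preimageU _ _ A B)) _.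
by apply: le_trans (leeD An Bn) _; rewrite -EFinD lee_fin; lra.
Qed.

Lemma cvg_measure_bigcup_setD (A : nat -> set T) : (forall k, measurable (A k)) ->
  mu (\bigcup_k A k `\` \big[setU/set0]_(k < K) A k) @[K --> \oo] --> 0.
Proof.
move=> mA; set U := \bigcup_k A k; pose B K := \big[setU/set0]_(k < K) A k.
have mU : measurable U by apply: bigcupT_measurable.
have mW K : measurable (U `\` B K) by apply/measurableD/bigsetU_measurable.
have cap0 : \bigcap_K (U `\` B K) = set0.
  apply/seteqP; split => x // capx; have [[k _ Akx] _] := capx 0%N I.
  by have [_] := capx k.+1 I; apply; rewrite /B big_ord_recr; right.
have := @nonincreasing_cvg_mu _ _ _ mu (fun K => U `\` B K).
rewrite cap0 measure0; apply => //.
  by rewrite (le_lt_trans (probability_le1 _ _)) ?ltry.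
by move=> m n mn; rewrite subsetEset; apply: setDS; apply: subset_bigsetU.
Qed.

Lemma rigid_bigcup (A : nat -> set T) :
  (forall k, rigid_set (A k)) -> rigid_set (\bigcup_k A k).
Proof.
move=> rA; have mA k : measurable (A k) by case: (rA k).
set U := \bigcup_k A k; pose B K := \big[setU/set0]_(k < K) A k.
have rB K : rigid_set (B K).
  elim: K => [|K IH]; first by rewrite /B big_ord0; apply: rigid_set0.
  by rewrite /B big_ord_recr; apply: rigid_setU.
have mU : measurable U by apply: bigcupT_measurable.
split=> // e e_gt0; have e3_gt0 : (0 < e / 3)%R by rewrite divr_gt0.
have [K _ tail] := proj1 (nneg_cvge0P (fun _ => measure_ge0 _ _))
  (cvg_measure_bigcup_setD mA) _ e3_gt0.
have {tail}tailK : mu (U `\` B K) <= (e / 3)%:E by apply: tail => /=.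
have [mBK /(_ _ e3_gt0)] := rB K; apply: filterS => n BKn.
have mW : measurable (U `\` B K) by apply: measurableD.
apply: le_trans (measure_le_subU (measurable_symdiff_preimage n mU)
  (measurable_symdiff_preimage n mBK) (measurableU _ _ (measurable_f n mW) mW)
  (symdiff_preimage_setD (@bigsetU_bigcup _ _ K))) _.
apply: le_trans (leeD BKn (measureU2 _ (measurable_f n mW) mW)) _.
have fW : mu (f n @^-1` (U `\` B K)) <= (e / 3)%:E by rewrite mu_f.
apply: le_trans (leeD (lexx _) (leeD fW tailK)) _.
by rewrite -!EFinD lee_fin; lra.
Qed.

Lemma sigma_algebra_rigid_set : sigma_algebra setT rigid_set.
Proof. by split; [apply: rigid_set0|apply: rigid_setC|apply: rigid_bigcup]. Qed.

Lemma rigid_set_generated (G : set (set T)) : measurable = <<s G >> ->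
  G `<=` rigid_set -> forall A, measurable A -> rigid_set A.
Proof. by move=> mG Grigid A; rewrite mG; apply: (smallest_sub sigma_algebra_rigid_set Grigid). Qed.

End Rigidity.

Lemma symdiff_shift_cylinder (L : nat) (i : int) (b : bool) :
  symdiff (shiftz (- L%:Z) @^-1` [set x | x i = b]) [set x | x i = b] `<=`
  shiftz (i - L%:Z) @^-1` mismatch L.
Proof.
move=> x; rewrite /symdiff /mismatch /shiftz /= add0r [(Posz L + _)%R]addrC subrK.
by case=> [[-> xi]|[-> xi]]; apply/eqP => xiL; apply: xi; rewrite xiL.
Qed.

Section CylinderRigidity.
Variables (l1 : nat) (C : nat -> seq (seq bool)).
Hypotheses (hC : is_construction l1 C) (l1_ge25 : (25 <= l1)%N).
Variables (R : realType) (mu : probability Omega R).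
Hypothesis muX : invariant_on mu (subshiftX C).

Lemma measure_mismatch_le k : mu (mismatch (wlen C k.+2)) <=
  ((2 * #|Pfin (size (C k.+1))|)%:R / (size (C k.+1))%:R)%:E.
Proof.
set N := size (C k.+1); set P := #|Pfin N|; set l := wlen C k.+1.
have l_gt0 : (0 < l)%N := wlen_gt0 hC l1_ge25 k.
have cnt x : subshiftX C x -> (count (fun i => shiftz i%:Z x \in mismatch (wlen C k.+2))
    (iota 0 (wlen C k.+2)) <= 2 * (P * l))%N.
  by move=> Xx; rewrite count_mismatch; apply: (hamming_subshift_window hC l1_ge25).
apply: le_trans (measure_le_orbit_count muX (measurable_subshiftX C)
  (measurable_mismatch _) (wlen_gt0 hC l1_ge25 k.+1) cnt) _.
rewrite lee_fin (wlenS hC) -/N -/l mulnA !natrM -mulf_div divff ?mulr1 //.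
by rewrite pnatr_eq0 -lt0n.
Qed.

Lemma cylinder_rigid (i : int) (b : bool) :
  rigid_set mu (fun n => shiftz (- (wlen C n)%:Z)) [set x | x i = b].
Proof.
split=> [|e e_gt0]; first exact: measurable_cylinder.
have [M eM] : exists M : nat, (6 / e < M%:R)%R.
  by exists (Num.Def.archi_bound (6 / e)); apply: archi_boundP; rewrite divr_ge0 // ltW.
exists (M.+1 * M.+1).+2 => // n /= Mn.
have [k -> Mk] : exists2 k, n = k.+2 & (M.+1 * M.+1 <= k)%N by exists (n - 2)%N; lia.
set N := size (C k.+1).
have NM : (M.+1 * M.+1 <= N)%N by apply: leq_trans (size_C_ge hC l1_ge25 k); lia.
set L := wlen C k.+2.
apply: (@le_trans _ _ (mu (shiftz (i - L%:Z) @^-1` mismatch L))).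
  apply: le_measure; last exact: symdiff_shift_cylinder.
    rewrite inE; apply: measurable_symdiff; last exact: measurable_cylinder.
    by apply: measurable_shiftz; apply: measurable_cylinder.
  by rewrite inE; apply: measurable_shiftz; apply: measurable_mismatch.
rewrite (shiftz_preserving muX _ (measurable_mismatch _)).
apply: le_trans (measure_mismatch_le k) _; rewrite lee_fin ler_pdivrMr ?ltr0n ?(leq_trans _ NM) //.
have : ((2 * #|Pfin N|)%:R * M%:R <= 6 * N%:R :> R)%R.
  by rewrite -natrM -(natrM R 6) ler_nat; apply: card_Pfin_ratio.
have : (6 <= e * M%:R)%R by move: eM; rewrite ltr_pdivrMr // mulrC => /ltW.
have : (0 < M%:R :> R)%R by apply: le_lt_trans eM; rewrite divr_ge0 // ltW.
have : (0 <= N%:R :> R)%R by [].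
nra.
Qed.

End CylinderRigidity.

Local Close Scope ereal_scope.

Theorem mainTheorem10 :
  exists L0 : nat, forall (l1 : nat) (C : nat -> seq (seq bool)),
    (L0 <= l1)%N -> is_construction l1 C ->
    forall (R : realType) (mu : probability Omega R),
      invariant_on mu (subshiftX C) ->
      forall A : set Omega, measurable A -> A `<=` subshiftX C ->
        (fun n : nat => mu (symdiff (shiftn (wlen C n) @` A) A)) @ \oo --> 0%E.
Proof.
exists 25 => l1 C l1_ge25 hC R mu muX A mA _.
have rigidA : rigid_set mu (fun n => shiftz (- (wlen C n)%:Z)) A.
  apply: (@rigid_set_generated _ _ _ mu _ _ _ cylinders) => //.
  - by move=> n B; apply: measurable_shiftz.
  - by move=> n B; apply: (shiftz_preserving muX).
  - by move=> _ [j [b ->]]; apply: (cylinder_rigid hC l1_ge25 muX).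
apply/nneg_cvge0P => [n|e /rigidA.2]; first exact: measure_ge0.
apply: filterS => n.
by have -> : shiftn (wlen C n) @` A = shiftz (- (wlen C n)%:Z) @^-1` A := image_shiftz _ A.
Qed.
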